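(* Let $\epsilon<2$ be a constant. For any instance oracle $f$ with $\max\{|f(G,v)|: G \text{ an } n\text{-node graph}, v\in G\}=o(n\log n)$ and any deterministic exploration algorithm $A$, there exist a constant $c>0$ and infinitely many $n$ such that for each of them some $n$-node graph $G$ and starting node $v$ force the agent executing $A$ with input $f(G,v)$ from $v$ to make at least $c n^{\epsilon}$ edge traversals before completing exploration; i.e., exploration takes time $\Omega(n^\epsilon)$ on some $n$-node graph, for arbitrarily large $n$.
   Context: Model: a graph is a simple connected undirected graph with $n$ nodes. Nodes are unlabeled; at each node of degree $d$ the incident edges carry distinct port numbers $0,\dots,d-1$, arbitrarily assigned. A mobile agent starts at some node. At each step, located at a node $u$ whose degree it knows, it chooses a port at $u$ and traverses the corresponding edge to a neighbor $w$; upon arrival it learns the port number of this edge at $w$ and the degree of $w$. The agent must visit all nodes and stop; the time of exploration is the number of edge traversals. A deterministic exploration algorithm receives as input a binary string (advice); its size is its length. An instance oracle is a function assigning a binary string $f(G,v)$ to each pair $(G,v)$ where $G$ is a port-numbered graph and $v$ is the starting node of the agent. Logarithms are to base 2. *)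

From Stdlib Require Export Reals List Arith.
Export ListNotations.
Open Scope R_scope.

Definition log2 (x : R) : R := ln x / ln 2.

(* Nodes are 0 .. pn-1.  [deg u] is the degree of u;
   for a port p < deg u, [nbr u p] is the neighbour reached through port p
   and [rport u p] is the port number of that edge at the neighbour.
   Values outside the domain are irrelevant junk. *)
Record pgraph := PGraph {
  pn : nat;
  deg : nat -> nat;
  nbr : nat -> nat -> nat;
  rport : nat -> nat -> nat
}.

Inductive reach (G : pgraph) : nat -> nat -> Prop :=
| reach_refl u : reach G u u
| reach_step u p w : (p < deg G u)%nat -> reach G (nbr G u p) w -> reach G u w.

Definition pg_ok (G : pgraph) : Prop :=
  (1 <= pn G)%nat /\
  (forall u p, (u < pn G)%nat -> (p < deg G u)%nat ->
     (nbr G u p < pn G)%nat /\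
     (rport G u p < deg G (nbr G u p))%nat /\
     nbr G (nbr G u p) (rport G u p) = u /\
     rport G (nbr G u p) (rport G u p) = p /\
     nbr G u p <> u) /\
  (forall u p q, (u < pn G)%nat -> (p < deg G u)%nat -> (q < deg G u)%nat ->
     p <> q -> nbr G u p <> nbr G u q) /\
  (forall u w, (u < pn G)%nat -> (w < pn G)%nat -> reach G u w).

(* A deterministic exploration algorithm: given the advice, the degree of the
   starting node and the history of observations
   (port taken, port of entry at the new node, degree of the new node),
   it outputs [None] (stop) or [Some p] (traverse port p). *)
Definition algo := list bool -> nat -> list (nat * nat * nat) -> option nat.

Definition oracle := pgraph -> nat -> list bool.

(* State after k steps: (current node, history, visited nodes), or None if
   the agent stopped earlier or chose an invalid port. *)
Fixpoint run (G : pgraph) (A : algo) (adv : list bool) (v : nat) (k : nat)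
  : option (nat * list (nat * nat * nat) * list nat) :=
  match k with
  | O => Some (v, [], [v])
  | S k' =>
    match run G A adv v k' with
    | Some (u, h, vis) =>
      match A adv (deg G v) h with
      | Some p =>
        if Nat.ltb p (deg G u) then
          let w := nbr G u p in
          Some (w, h ++ [(p, rport G u p, deg G w)], w :: vis)
        else None
      | None => None
      end
    | None => None
    end
  end.

Definition completes_at (G : pgraph) (A : algo) (adv : list bool) (v k : nat) : Prop :=
  exists u h vis,
    run G A adv v k = Some (u, h, vis) /\
    A adv (deg G v) h = None /\
    (forall x, (x < pn G)%nat -> In x vis).

(* An agent with advice of length o(n log n) cannot tell apart the following
   graphs. For m = 2^X and a function g from [0, m) to [1, m), take the complete
   bipartite graph K_{m,m} and cut each edge {i, m + g i} into two pendant edges,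
   ending in new leaves 2m + i and 3m + i. All these graphs have n = 4m nodes and
   the same degrees, and the agent learns something about g only when it enters
   a leaf whose index it has not seen before. Hence its first T moves are
   determined by its advice and by the set of at most m times at which this
   happens, while an exploration visits every leaf and thereby determines g. If
   every admissible g were explored within T moves, counting would give
   (m-1)^(m-2) m! <= (L+1) 2^L (T+m)^m for advice length L; for L = o(n log n)
   and T = n^2 / 2^(r+4) with r large this fails, so some graph needs
   T >= n^eps / 16 moves. *)

From Stdlib Require Import Lia Lra Classical.

Open Scope nat_scope.
Open Scope bool_scope.

Lemma reach_trans G u v w : reach G u v -> reach G v w -> reach G u w.
Proof. induction 1; intros; auto. eapply reach_step; eauto. Qed.

Lemma reach_edge G u p w : p < deg G u -> nbr G u p = w -> reach G u w.
Proof. intros Hp <-. apply (reach_step G u p); [exact Hp | constructor]. Qed.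

Definition ports_consistent (G : pgraph) : Prop :=
  forall u p, u < pn G -> p < deg G u ->
     nbr G u p < pn G /\
     rport G u p < deg G (nbr G u p) /\
     nbr G (nbr G u p) (rport G u p) = u /\
     rport G (nbr G u p) (rport G u p) = p /\
     nbr G u p <> u.

Lemma reach_sym G u w : ports_consistent G -> u < pn G -> reach G u w -> reach G w u.
Proof.
intros Hcons Hu Hr. induction Hr as [u|u p w Hp _ IH]; [constructor|].
destruct (Hcons u p Hu Hp) as (Hw & Hq & Hback & _).
apply (reach_trans _ _ (nbr G u p)); [now apply IH|].
now apply (reach_edge _ _ (rport G u p)).
Qed.

Lemma reach_via_hub G h : ports_consistent G -> h < pn G ->
  (forall u, u < pn G -> reach G u h) -> forall u w, u < pn G -> w < pn G -> reach G u w.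
Proof.
intros Hcons Hh Hhub u w Hu Hw.
apply (reach_trans _ _ h); [now apply Hhub|].
apply reach_sym; auto.
Qed.

(* Nodes [0, m) and [m, 2m) are the two sides of K_{m,m}. At left node i, port
   g i leads to the leaf 2m + i instead of to m + g i; at right node m + j, port p
   leads to the leaf 3m + p instead of to p whenever g p = j. *)
Definition cut_deg (m u : nat) : nat := if u <? 2*m then m else 1.

Definition cut_nbr (m : nat) (g : nat -> nat) (u p : nat) : nat :=
  if u <? m then (if p =? g u then 2*m + u else m + p)
  else if u <? 2*m then (if g p =? u - m then 3*m + p else p)
  else if u <? 3*m then u - 2*m
  else m + g (u - 3*m).

Definition cut_rport (m : nat) (g : nat -> nat) (u p : nat) : nat :=
  if u <? m then (if p =? g u then 0 else u)
  else if u <? 2*m then (if g p =? u - m then 0 else u - m)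
  else if u <? 3*m then g (u - 2*m)
  else u - 3*m.

Definition cut_graph (m : nat) (g : nat -> nat) : pgraph :=
  PGraph (4*m) (cut_deg m) (cut_nbr m g) (cut_rport m g).

(* g >= 1 keeps node m adjacent to every left node, and g 0 <> g 1 keeps every
   right node adjacent to node 0 or node 1; so the graph is connected. *)
Definition admissible (m : nat) (g : nat -> nat) : Prop :=
  3 <= m /\ g 0 = 1 /\ g 1 = 2 /\ (forall i, i < m -> 1 <= g i < m).

Ltac decide_nat_tests :=
  repeat (match goal with
  | |- context [?a <? ?b] =>
      first [rewrite (proj2 (Nat.ltb_lt a b)) by lia | rewrite (proj2 (Nat.ltb_ge a b)) by lia]
  | |- context [?a <=? ?b] =>
      first [rewrite (proj2 (Nat.leb_le a b)) by lia | rewrite (proj2 (Nat.leb_gt a b)) by lia]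
  | |- context [?a =? ?b] =>
      first [rewrite (proj2 (Nat.eqb_eq a b)) by lia | rewrite (proj2 (Nat.eqb_neq a b)) by lia]
  | |- context [?a + ?b - ?a] => replace (a + b - a) with b by lia
  | H : context [?a <? ?b] |- _ =>
      first [rewrite (proj2 (Nat.ltb_lt a b)) in H by lia
            | rewrite (proj2 (Nat.ltb_ge a b)) in H by lia]
  | H : context [?a <=? ?b] |- _ =>
      first [rewrite (proj2 (Nat.leb_le a b)) in H by lia
            | rewrite (proj2 (Nat.leb_gt a b)) in H by lia]
  | H : context [?a =? ?b] |- _ =>
      first [rewrite (proj2 (Nat.eqb_eq a b)) in H by lia
            | rewrite (proj2 (Nat.eqb_neq a b)) in H by lia]
  | H : context [?a + ?b - ?a] |- _ => replace (a + b - a) with b in H by lia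
  end; cbn [andb orb negb] in *).

Ltac cut_simpl :=
  cbn [pn deg nbr rport cut_graph] in *; unfold cut_deg, cut_nbr, cut_rport in *;
  decide_nat_tests.

Lemma cut_node_cases m u : u < 4*m ->
  u < m \/ (exists j, j < m /\ u = m + j) \/
  (exists i, i < m /\ u = 2*m + i) \/ (exists i, i < m /\ u = 3*m + i).
Proof.
intros Hu.
destruct (Nat.lt_ge_cases u m); [now left|right].
destruct (Nat.lt_ge_cases u (2*m)); [left; exists (u - m); lia|right].
destruct (Nat.lt_ge_cases u (3*m)); [left; exists (u - 2*m); lia|right].
exists (u - 3*m); lia.
Qed.

Section CutGraph.
Variables (m : nat) (g : nat -> nat).
Hypothesis Hg : admissible m g.

Lemma cut_graph_ports : ports_consistent (cut_graph m g).
Proof.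
destruct Hg as (Hm & _ & _ & Hrange).
intros u p Hu Hp. cbn [pn] in Hu.
destruct (cut_node_cases m u Hu) as [Hl|[(j & Hj & ->)|[(i & Hi & ->)|(i & Hi & ->)]]].
- pose proof (Hrange u Hl). cut_simpl.
  destruct (Nat.eqb_spec p (g u)); cut_simpl; repeat split; lia.
- cut_simpl. pose proof (Hrange p Hp).
  destruct (Nat.eqb_spec (g p) j); cut_simpl; repeat split; lia.
- cut_simpl. pose proof (Hrange i Hi). cut_simpl. repeat split; lia.
- cut_simpl. pose proof (Hrange i Hi). cut_simpl. repeat split; lia.
Qed.

Lemma cut_graph_nbr_inj : forall u p q, u < 4*m -> p < cut_deg m u -> q < cut_deg m u ->
  p <> q -> cut_nbr m g u p <> cut_nbr m g u q.
Proof.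
intros u p q Hu Hp Hq Hpq.
destruct (cut_node_cases m u Hu) as [Hl|[(j & Hj & ->)|[(i & Hi & ->)|(i & Hi & ->)]]];
  cut_simpl; try lia.
- destruct (Nat.eqb_spec p (g u)), (Nat.eqb_spec q (g u)); lia.
- destruct (Nat.eqb_spec (g p) j), (Nat.eqb_spec (g q) j); lia.
Qed.

Lemma reach_hub_left i : i < m -> reach (cut_graph m g) i m.
Proof.
intros Hi. destruct Hg as (_ & _ & _ & Hrange). pose proof (Hrange i Hi).
apply (reach_edge _ _ 0); cut_simpl; lia.
Qed.

Lemma reach_hub_right j : j < m -> reach (cut_graph m g) (m + j) m.
Proof.
intros Hj. destruct Hg as (Hm & Hg0 & Hg1 & _).
destruct (Nat.eq_dec j 0) as [->|Hj0]; [rewrite Nat.add_0_r; constructor|].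
set (p := if j =? 1 then 1 else 0).
assert (Hp : p < m /\ g p <> j) by (unfold p; destruct (Nat.eqb_spec j 1); lia).
apply (reach_trans _ _ p); [|apply reach_hub_left; lia].
apply (reach_edge _ _ p); cut_simpl; lia.
Qed.

Lemma reach_hub u : u < 4*m -> reach (cut_graph m g) u m.
Proof.
intros Hu. destruct Hg as (_ & _ & _ & Hrange).
destruct (cut_node_cases m u Hu) as [Hl|[(j & Hj & ->)|[(i & Hi & ->)|(i & Hi & ->)]]].
- now apply reach_hub_left.
- now apply reach_hub_right.
- apply (reach_trans _ _ i); [|now apply reach_hub_left].
  apply (reach_edge _ _ 0); cut_simpl; lia.
- pose proof (Hrange i Hi).
  apply (reach_trans _ _ (m + g i)); [|apply reach_hub_right; lia].
  apply (reach_edge _ _ 0); cut_simpl; lia.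
Qed.

Lemma cut_graph_ok : pg_ok (cut_graph m g).
Proof.
pose proof Hg as (Hm & _).
split; [cbn; lia|]. split; [exact cut_graph_ports|]. split.
- exact cut_graph_nbr_inj.
- apply (reach_via_hub _ m); [exact cut_graph_ports | cbn; lia | exact reach_hub].
Qed.

End CutGraph.

Lemma run_current_visited G A a v t u h vis :
  run G A a v t = Some (u, h, vis) -> In u vis.
Proof.
destruct t as [|t]; cbn [run].
- intros [= <- _ <-]. now left.
- destruct (run G A a v t) as [[[u0 h0] vis0]|]; [|discriminate].
  destruct (A a (deg G v) h0) as [p|]; [|discriminate].
  destruct (p <? deg G u0); [|discriminate].
  intros [= <- _ <-]. now left.
Qed.

Lemma run_in_range G A a v t u h vis : pg_ok G -> v < pn G ->
  run G A a v t = Some (u, h, vis) -> u < pn G.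
Proof.
intros (_ & Hports & _) Hv. revert u h vis. induction t as [|t IH]; cbn [run]; intros u h vis.
- now intros [= <- _ _].
- destruct (run G A a v t) as [[[u0 h0] vis0]|] eqn:Erun; [|discriminate].
  destruct (A a (deg G v) h0) as [p|]; [|discriminate].
  destruct (Nat.ltb_spec p (deg G u0)); [|discriminate].
  intros [= <- _ _]. apply Hports; eauto.
Qed.

Lemma run_succ_move G A a v t u h vis p :
  run G A a v t = Some (u, h, vis) -> A a (deg G v) h = Some p -> p < deg G u ->
  run G A a v (S t) =
    Some (nbr G u p, h ++ [(p, rport G u p, deg G (nbr G u p))], nbr G u p :: vis).
Proof.
intros Hrun HA Hp. cbn [run]. rewrite Hrun, HA. now rewrite (proj2 (Nat.ltb_lt _ _) Hp).
Qed.

Lemma run_succ_stop G A a v t u h vis :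
  run G A a v t = Some (u, h, vis) ->
  (forall p, A a (deg G v) h = Some p -> deg G u <= p) -> run G A a v (S t) = None.
Proof.
intros Hrun Hstop. cbn [run]. rewrite Hrun.
destruct (A a (deg G v) h) as [p|]; [|reflexivity].
now rewrite (proj2 (Nat.ltb_ge _ _) (Hstop p eq_refl)).
Qed.

Fixpoint count_below (P : nat -> bool) (T : nat) : nat :=
  match T with
  | 0 => 0
  | S T' => count_below P T' + (if P T' then 1 else 0)
  end.

Lemma count_below_le P T : count_below P T <= T.
Proof. induction T as [|T IH]; cbn; [lia|]. destruct (P T); lia. Qed.

Lemma count_below_mono P P' T : (forall i, P i = true -> P' i = true) ->
  count_below P T <= count_below P' T.
Proof.
intros H. induction T as [|T IH]; cbn; [lia|].
destruct (P T) eqn:E; [rewrite (H T E)|destruct (P' T)]; lia.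
Qed.

Lemma count_below_mono_strict P P' T i0 : (forall i, P i = true -> P' i = true) ->
  i0 < T -> P i0 = false -> P' i0 = true -> count_below P T < count_below P' T.
Proof.
intros H Hi H0 H1. induction T as [|T IH]; [lia|]. cbn.
destruct (Nat.eq_dec i0 T) as [->|Hne].
- rewrite H0, H1. pose proof (count_below_mono P P' T H). lia.
- assert (count_below P T < count_below P' T) by (apply IH; lia).
  destruct (P T) eqn:E; [rewrite (H T E)|destruct (P' T)]; lia.
Qed.

Section Discovery.
Variable m : nat.

Definition is_leaf (w : nat) : bool := (2*m <=? w) && (w <? 4*m).
Definition leaf_index (w : nat) : nat := if w <? 3*m then w - 2*m else w - 3*m.

(* Both leaves of index i hang off the cut edge {i, m + g i}, so visiting either
   of them tells the agent g i. *)
Definition revealed (vis : list nat) (i : nat) : bool :=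
  existsb (fun w => is_leaf w && (leaf_index w =? i)) vis.

Definition fresh_leaf (vis : list nat) (w : nat) : bool :=
  is_leaf w && negb (revealed vis (leaf_index w)).

Lemma revealed_In w vis : In w vis -> is_leaf w = true -> revealed vis (leaf_index w) = true.
Proof.
intros Hin Hl. apply existsb_exists. exists w. now rewrite Hl, Nat.eqb_refl.
Qed.

Lemma revealed_cons w vis i :
  revealed (w :: vis) i = (is_leaf w && (leaf_index w =? i)) || revealed vis i.
Proof. reflexivity. Qed.

Definition agree_on_revealed (g g' : nat -> nat) (vis : list nat) : Prop :=
  forall i, i < m -> revealed vis i = true -> g i = g' i.

Lemma agree_on_revealed_cons g g' vis w : agree_on_revealed g g' vis ->
  (is_leaf w = true -> g (leaf_index w) = g' (leaf_index w)) ->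
  agree_on_revealed g g' (w :: vis).
Proof.
intros Hvis Hw i Hi. rewrite revealed_cons.
destruct (is_leaf w) eqn:Hl; cbn; [|now apply Hvis].
destruct (Nat.eqb_spec (leaf_index w) i) as [<-|_]; [auto|now apply Hvis].
Qed.

Ltac leaf_simpl := unfold fresh_leaf, is_leaf, leaf_index in *; cut_simpl.

Lemma cut_step_agree g g' vis u p :
  admissible m g -> admissible m g' -> u < 4*m -> In u vis -> p < cut_deg m u ->
  agree_on_revealed g g' vis ->
  fresh_leaf vis (cut_nbr m g u p) = fresh_leaf vis (cut_nbr m g' u p) ->
  cut_nbr m g u p = cut_nbr m g' u p /\ cut_rport m g u p = cut_rport m g' u p /\
  (is_leaf (cut_nbr m g u p) = true ->
     g (leaf_index (cut_nbr m g u p)) = g' (leaf_index (cut_nbr m g u p))).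
Proof.
intros (Hm & _ & _ & Hr) (_ & _ & _ & Hr') Hu Hin Hp Hinv Hfresh.
destruct (cut_node_cases m u Hu) as [Hl|[(j & Hj & ->)|[(i & Hi & ->)|(i & Hi & ->)]]].
- pose proof (Hr u Hl). pose proof (Hr' u Hl).
  destruct (revealed vis u) eqn:Hrev.
  + assert (Hgu : g u = g' u) by auto.
    leaf_simpl. rewrite <- Hgu.
    destruct (Nat.eqb_spec p (g u)); leaf_simpl; intuition congruence.
  + leaf_simpl.
    destruct (Nat.eqb_spec p (g u)), (Nat.eqb_spec p (g' u)); leaf_simpl;
      rewrite ?Hrev in Hfresh; cbn in Hfresh; try discriminate; intuition congruence.
- leaf_simpl. pose proof (Hr p Hp). pose proof (Hr' p Hp).
  destruct (revealed vis p) eqn:Hrev.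
  + assert (Hgp : g p = g' p) by auto.
    rewrite <- Hgp.
    destruct (Nat.eqb_spec (g p) j); leaf_simpl; intuition congruence.
  + destruct (Nat.eqb_spec (g p) j), (Nat.eqb_spec (g' p) j); leaf_simpl;
      rewrite ?Hrev in Hfresh; cbn in Hfresh; try discriminate; intuition congruence.
- pose proof (revealed_In _ vis Hin). leaf_simpl.
  rewrite (Hinv i) by auto. leaf_simpl. intuition congruence.
- pose proof (revealed_In _ vis Hin). leaf_simpl.
  rewrite (Hinv i) by auto. pose proof (Hr' i Hi). leaf_simpl. intuition congruence.
Qed.

(* The only bit of a run that depends on g: whether move t + 1 enters a leaf of
   an index not revealed before. *)
Definition finds_leaf (G : pgraph) (A : algo) (a : list bool) (t : nat) : bool :=
  match run G A a 0 t, run G A a 0 (S t) with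
  | Some (_, _, vis), Some (w, _, _) => fresh_leaf vis w
  | _, _ => false
  end.

Lemma finds_leaf_move G A a t u h vis p :
  run G A a 0 t = Some (u, h, vis) -> A a (deg G 0) h = Some p -> p < deg G u ->
  finds_leaf G A a t = fresh_leaf vis (nbr G u p).
Proof.
intros Hrun HA Hp. unfold finds_leaf. now rewrite Hrun, (run_succ_move _ _ _ _ _ _ _ _ _ Hrun HA Hp).
Qed.

Lemma finds_leaf_stuck G A a t : run G A a 0 (S t) = None -> finds_leaf G A a t = false.
Proof.
intros Hnone. unfold finds_leaf. rewrite Hnone.
now destruct (run G A a 0 t) as [[[u h] vis]|].
Qed.

Lemma runs_agree g g' A a T : admissible m g -> admissible m g' ->
  (forall t, t < T -> finds_leaf (cut_graph m g) A a t = finds_leaf (cut_graph m g') A a t) ->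
  forall t, t <= T ->
    run (cut_graph m g) A a 0 t = run (cut_graph m g') A a 0 t /\
    (forall u h vis, run (cut_graph m g) A a 0 t = Some (u, h, vis) ->
       agree_on_revealed g g' vis).
Proof.
intros Hg Hg' Hfinds. induction t as [|t IH]; intros Ht.
- split; [reflexivity|]. intros u h vis [= <- _ <-] i Hi.
  destruct Hg as (Hm & _). unfold revealed, is_leaf. cbn. decide_nat_tests. discriminate.
- destruct IH as [IHrun IHagree]; [lia|].
  destruct (run (cut_graph m g) A a 0 t) as [[[u h] vis]|] eqn:Erun.
  2: { cbn [run]. now rewrite Erun, <- IHrun. }
  symmetry in IHrun. specialize (IHagree u h vis eq_refl).
  assert (Hu : u < 4*m).
  { eapply (run_in_range (cut_graph m g)); [exact (cut_graph_ok m g Hg)| |exact Erun].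
    cbn. destruct Hg; lia. }
  destruct (A a (cut_deg m 0) h) as [p|] eqn:HA;
    [destruct (Nat.lt_ge_cases p (cut_deg m u)) as [Hp|Hp]|].
  2, 3: assert (Hstop : forall q, A a (cut_deg m 0) h = Some q -> cut_deg m u <= q)
          by (intros q Hq; congruence);
        rewrite (run_succ_stop _ _ _ _ _ _ _ _ Erun Hstop),
          (run_succ_stop _ _ _ _ _ _ _ _ IHrun Hstop);
        split; [reflexivity|discriminate].
  rewrite (run_succ_move _ _ _ _ _ _ _ _ _ Erun HA Hp),
    (run_succ_move _ _ _ _ _ _ _ _ _ IHrun HA Hp).
  assert (Hfresh := Hfinds t ltac:(lia)).
  rewrite (finds_leaf_move _ _ _ _ _ _ _ _ Erun HA Hp),
    (finds_leaf_move _ _ _ _ _ _ _ _ IHrun HA Hp) in Hfresh.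
  destruct (cut_step_agree g g' vis u p Hg Hg' Hu (run_current_visited _ _ _ _ _ _ _ _ Erun)
              Hp IHagree Hfresh) as (Enbr & Erport & Eleaf).
  cbn [nbr rport deg cut_graph]. rewrite Enbr, Erport. split; [reflexivity|].
  intros u' h' vis' [= _ _ <-]. rewrite <- Enbr. now apply agree_on_revealed_cons.
Qed.

Lemma leaf_index_lt w : is_leaf w = true -> leaf_index w < m.
Proof.
unfold is_leaf, leaf_index. intros Hl.
apply andb_prop in Hl as [H1 H2]. apply Nat.leb_le in H1. apply Nat.ltb_lt in H2.
destruct (Nat.ltb_spec w (3*m)); lia.
Qed.

Lemma count_finds_leaf_le_revealed g A a t : admissible m g ->
  count_below (finds_leaf (cut_graph m g) A a) t <=
  match run (cut_graph m g) A a 0 t with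
  | Some (_, _, vis) => count_below (revealed vis) m
  | None => m
  end.
Proof.
intros Hg. induction t as [|t IH]; [cbn; lia|]. cbn [count_below].
destruct (run (cut_graph m g) A a 0 t) as [[[u h] vis]|] eqn:Erun.
2: { assert (Hnone : run (cut_graph m g) A a 0 (S t) = None) by (cbn [run]; now rewrite Erun).
     rewrite (finds_leaf_stuck _ _ _ _ Hnone), Hnone. lia. }
pose proof (count_below_le (revealed vis) m).
destruct (A a (cut_deg m 0) h) as [p|] eqn:HA;
  [destruct (Nat.lt_ge_cases p (cut_deg m u)) as [Hp|Hp]|].
2, 3: assert (Hstop : forall q, A a (cut_deg m 0) h = Some q -> cut_deg m u <= q)
        by (intros q Hq; congruence);
      pose proof (run_succ_stop _ _ _ _ _ _ _ _ Erun Hstop) as Hnone;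
      rewrite (finds_leaf_stuck _ _ _ _ Hnone), Hnone; lia.
rewrite (finds_leaf_move _ _ _ _ _ _ _ _ Erun HA Hp), (run_succ_move _ _ _ _ _ _ _ _ _ Erun HA Hp).
set (w := nbr (cut_graph m g) u p).
assert (Hmono : forall i, revealed vis i = true -> revealed (w :: vis) i = true)
  by (intros i Hi; now rewrite revealed_cons, Hi, Bool.orb_true_r).
unfold fresh_leaf. destruct (is_leaf w) eqn:Hl; cbn [andb].
- destruct (revealed vis (leaf_index w)) eqn:Hnew; cbn [negb].
  + pose proof (count_below_mono _ _ m Hmono). lia.
  + assert (count_below (revealed vis) m < count_below (revealed (w :: vis)) m).
    { apply (count_below_mono_strict _ _ _ (leaf_index w)); auto using leaf_index_lt.
      now rewrite revealed_cons, Hl, Nat.eqb_refl. }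
    lia.
- pose proof (count_below_mono _ _ m Hmono). lia.
Qed.

Lemma count_finds_leaf_le g A a t : admissible m g ->
  count_below (finds_leaf (cut_graph m g) A a) t <= m.
Proof.
intros Hg. pose proof (count_finds_leaf_le_revealed g A a t Hg).
destruct (run (cut_graph m g) A a 0 t) as [[[u h] vis]|]; [|lia].
pose proof (count_below_le (revealed vis) m). lia.
Qed.

Lemma finds_leaf_determines g g' A a T k : admissible m g -> admissible m g' ->
  (forall t, t < T -> finds_leaf (cut_graph m g) A a t = finds_leaf (cut_graph m g') A a t) ->
  k <= T -> completes_at (cut_graph m g) A a 0 k -> forall i, i < m -> g i = g' i.
Proof.
intros Hg Hg' Hfinds Hk (u & h & vis & Hrun & _ & Hall) i Hi.
destruct (runs_agree g g' A a T Hg Hg' Hfinds k Hk) as [_ Hagree].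
apply (Hagree u h vis Hrun i Hi).
assert (Hleaf : is_leaf (2*m + i) = true) by (unfold is_leaf; decide_nat_tests; reflexivity).
assert (Hidx : leaf_index (2*m + i) = i) by (unfold leaf_index; decide_nat_tests; reflexivity).
rewrite <- Hidx at 1. apply revealed_In; [apply Hall; cbn; lia | exact Hleaf].
Qed.

End Discovery.

From mathcomp Require all_boot zify.

Module CodeCounting.
Import all_boot zify.

Lemma leq_exp2rW a b e : a <= b -> a ^ e <= b ^ e.
Proof. by case: e => [|e] // Hab; rewrite leq_exp2r. Qed.

Lemma ffact_leq_expn n k : n ^_ k <= n ^ k.
Proof.
elim: k n => [|k IH] n; first by rewrite ffactn0 expn0.
rewrite ffactnS expnS leq_mul //.
by apply: leq_trans (IH _) _; apply: leq_exp2rW; rewrite leq_pred.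
Qed.

Lemma expSn_ge_two_terms a k : a ^ k.+1 + k.+1 * a ^ k <= a.+1 ^ k.+1.
Proof.
elim: k => [|k IH]; first by rewrite !expn1 expn0; lia.
have H : a.+1 * (a ^ k.+1 + k.+1 * a ^ k) <= a.+1 ^ k.+2
  by rewrite [a.+1 ^ k.+2]expnS leq_mul2l IH orbT.
apply: leq_trans H. rewrite !expnS. nia.
Qed.

Definition card_small_sets (T m : nat) := #|[set B : {set 'I_T} | #|B| <= m]|.

Lemma card_small_setsS T m : card_small_sets T m.+1 = card_small_sets T m + 'C(T, m.+1).
Proof.
rewrite /card_small_sets -[T in 'C(T, _)]card_ord -card_draws.
have -> : [set B : {set 'I_T} | #|B| <= m.+1] =
          [set B : {set 'I_T} | #|B| <= m] :|: [set B : {set 'I_T} | #|B| == m.+1].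
  by apply/setP => B; rewrite !inE leq_eqVlt ltnS orbC.
rewrite cardsU.
have -> : [set B : {set 'I_T} | #|B| <= m] :&: [set B : {set 'I_T} | #|B| == m.+1] = set0.
  by apply/setP => B; rewrite !inE; case: eqP => [->|]; rewrite ?ltnn ?andbF.
by rewrite cards0 subn0.
Qed.

Lemma card_small_sets_fact T m : card_small_sets T m * m`! <= (T + m) ^ m.
Proof.
elim: m => [|m IH].
  rewrite /card_small_sets fact0 expn0 muln1 -(cards1 (set0 : {set 'I_T})).
  by apply: subset_leq_card; apply/subsetP => B; rewrite !inE leqn0 cards_eq0.
rewrite card_small_setsS factS mulnDl.
have Hbin : 'C(T, m.+1) * (m.+1 * m`!) <= T ^ m.+1
  by rewrite -factS bin_ffact ffact_leq_expn.
have Hsmall : card_small_sets T m * (m.+1 * m`!) <= m.+1 * (T + m) ^ m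
  by rewrite mulnCA leq_mul2l IH orbT.
have Htwo := expSn_ge_two_terms (T + m) m.
have Hmono : T ^ m.+1 <= (T + m) ^ m.+1 by apply: leq_exp2rW; rewrite leq_addr.
rewrite addnS. lia.
Qed.

Lemma card_set_count_below (P : nat -> bool) T : #|[set t : 'I_T | P t]| = count_below P T.
Proof.
rewrite -sum1dep_card big_mkcond /=.
elim: T => [|T IH]; first by rewrite big_ord0.
by rewrite big_ord_recr /= IH; case: (P T).
Qed.

Definition pad_code L (l : seq bool) : 'I_L.+1 * {ffun 'I_L -> bool} :=
  (inord (size l), [ffun i : 'I_L => nth false l i]).

Lemma pad_code_inj L l l' : size l <= L -> size l' <= L -> pad_code L l = pad_code L l' -> l = l'.
Proof.
move=> Hl Hl' [] Hsize Hbits.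
have Hsize' : size l = size l' by have := congr1 val Hsize; rewrite /= !inordK.
apply: (eq_from_nth (x0 := false) Hsize') => i Hi.
have HiL : i < L by apply: leq_trans Hl.
have := congr1 (fun f : {ffun 'I_L -> bool} => f (Ordinal HiL)) Hbits.
by rewrite !ffunE.
Qed.

Lemma card_box_le_codes (M R L T m : nat)
  (adv : (nat -> nat) -> seq bool) (E : (nat -> nat) -> nat -> bool) :
  let in_box s := forall i, i < M -> s i < R in
  (forall s, in_box s -> size (adv s) <= L /\ count_below (E s) T <= m) ->
  (forall s s', in_box s -> in_box s' -> adv s = adv s' ->
     (forall t, t < T -> E s t = E s' t) -> forall i, i < M -> s i = s' i) ->
  R ^ M * m`! <= L.+1 * 2 ^ L * (T + m) ^ m.
Proof.
move=> in_box Hcode Hinj.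
pose toN (f : {ffun 'I_M -> 'I_R}) : nat -> nat :=
  fun i => odflt 0 (omap (fun j : 'I_M => nat_of_ord (f j)) (insub i)).
have toNE f (j : 'I_M) : toN f j = f j by rewrite /toN valK.
have Hbox f : in_box (toN f).
  by move=> i Hi; rewrite -[i]/(nat_of_ord (Ordinal Hi)) toNE.
pose code (f : {ffun 'I_M -> 'I_R}) :=
  (pad_code L (adv (toN f)), [set t : 'I_T | E (toN f) t]).
have code_inj : injective code.
  move=> f f' Hff'.
  have [Hl _] := Hcode _ (Hbox f); have [Hl' _] := Hcode _ (Hbox f').
  have Hadv := pad_code_inj _ _ _ Hl Hl' (congr1 fst Hff').
  have /= HE := congr1 snd Hff'.
  apply/ffunP => j; apply: val_inj.
  have HEt t (Ht : t < T) : E (toN f) t = E (toN f') t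
    by have := congr1 (fun S : {set 'I_T} => Ordinal Ht \in S) HE; rewrite !inE.
  by have := Hinj _ _ (Hbox f) (Hbox f') Hadv HEt j (ltn_ord j); rewrite !toNE.
have Hcard : R ^ M <= L.+1 * 2 ^ L * card_small_sets T m.
  rewrite -[R in R ^ _]card_ord -[M in _ ^ M]card_ord -card_ffun -(card_imset _ code_inj).
  have -> : L.+1 * 2 ^ L = #|{: 'I_L.+1 * {ffun 'I_L -> bool}}|
    by rewrite card_prod card_ord card_ffun card_bool card_ord.
  rewrite /card_small_sets -cardsT -cardsX.
  apply: subset_leq_card; apply/subsetP => _ /imsetP [f _ ->].
  by rewrite !inE /= card_set_count_below (proj2 (Hcode _ (Hbox f))).
apply: leq_trans (leq_mul Hcard (leqnn _)) _.
by rewrite -mulnA leq_mul2l card_small_sets_fact orbT.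
Qed.

Lemma expn_pow x y : expn x y = Nat.pow x y.
Proof. by elim: y => //= y IH; rewrite expnS IH. Qed.

Lemma factorial_fact x : factorial x = Factorial.fact x.
Proof. by elim: x => //= y IH; rewrite factS IH. Qed.

Lemma box_le_codes (M R L T m : nat)
  (adv : (nat -> nat) -> list bool) (E : (nat -> nat) -> nat -> bool) :
  let in_box s := forall i, (i < M)%coq_nat -> (s i < R)%coq_nat in
  (forall s, in_box s -> (length (adv s) <= L)%coq_nat /\ (count_below (E s) T <= m)%coq_nat) ->
  (forall s s', in_box s -> in_box s' -> adv s = adv s' ->
     (forall t, (t < T)%coq_nat -> E s t = E s' t) -> forall i, (i < M)%coq_nat -> s i = s' i) ->
  (Nat.pow R M * Factorial.fact m <= S L * Nat.pow 2 L * Nat.pow (T + m) m)%coq_nat.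
Proof.
move=> in_box Hcode Hinj; apply/leP; rewrite -!expn_pow -factorial_fact.
have Hbox s : (forall i, i < M -> s i < R) -> in_box s by move=> Hs i /ltP Hi; apply/ltP/Hs.
apply: (card_box_le_codes M R L T m adv E).
- by move=> s /Hbox /Hcode [/leP -> /leP ->].
- move=> s s' /Hbox Hs /Hbox Hs' Hadv HE i /ltP.
  by apply: Hinj => // t Ht; apply/HE/ltP.
Qed.

End CodeCounting.

Definition box_fun (s : nat -> nat) (i : nat) : nat :=
  if i =? 0 then 1 else if i =? 1 then 2 else S (s (i - 2)).

Lemma admissible_box_fun m s : 3 <= m -> (forall i, i < m - 2 -> s i < m - 1) ->
  admissible m (box_fun s).
Proof.
intros Hm Hs. unfold admissible, box_fun. split; [lia|]. split; [reflexivity|].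
split; [reflexivity|]. intros i Hi.
destruct (Nat.eqb_spec i 0), (Nat.eqb_spec i 1); try lia. pose proof (Hs (i - 2)). lia.
Qed.

Lemma slow_cut_graph_exists m (f : oracle) (A : algo) L T : 3 <= m ->
  (forall g, admissible m g -> length (f (cut_graph m g) 0) <= L) ->
  S L * 2 ^ L * (T + m) ^ m < (m - 1) ^ (m - 2) * fact m ->
  exists g, admissible m g /\
    forall k, completes_at (cut_graph m g) A (f (cut_graph m g) 0) 0 k -> T <= k.
Proof.
intros Hm Hadv Hcount. apply NNPP. intros Hnone.
assert (Hfast : forall g, admissible m g ->
          exists k, k < T /\ completes_at (cut_graph m g) A (f (cut_graph m g) 0) 0 k).
{ intros g Hg. apply NNPP. intros Hslow. apply Hnone. exists g. split; [exact Hg|].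
  intros k Hk. apply Nat.nlt_ge. intros HkT. apply Hslow. now exists k. }
set (adv s := f (cut_graph m (box_fun s)) 0).
set (E s := finds_leaf m (cut_graph m (box_fun s)) A (adv s)).
assert (Hcodes : (m - 1) ^ (m - 2) * fact m <= S L * 2 ^ L * (T + m) ^ m).
{ apply (CodeCounting.box_le_codes (m - 2) (m - 1) L T m adv E).
  - intros s Hs. split; [now apply Hadv, admissible_box_fun|].
    now apply count_finds_leaf_le, admissible_box_fun.
  - intros s s' Hs Hs' Hadv_eq HE i Hi.
    pose proof (admissible_box_fun m s Hm Hs) as Hg.
    pose proof (admissible_box_fun m s' Hm Hs') as Hg'.
    destruct (Hfast _ Hg) as (k & Hk & Hcomp).
    assert (Hsame : forall t, t < T ->
              finds_leaf m (cut_graph m (box_fun s)) A (adv s) t =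
              finds_leaf m (cut_graph m (box_fun s')) A (adv s) t).
    { intros t Ht. rewrite Hadv_eq at 2. exact (HE t Ht). }
    pose proof (finds_leaf_determines m _ _ A (adv s) T k Hg Hg' Hsame
                  ltac:(lia) Hcomp (i + 2) ltac:(lia)) as Heq.
    unfold box_fun in Heq. decide_nat_tests. replace (i + 2 - 2) with i in Heq by lia.
    congruence. }
lia.
Qed.

Open Scope R_scope.

Lemma pow_succ_le_3 k : (1 <= k)%nat -> ((k + 1) ^ k <= 3 * k ^ k)%nat.
Proof.
intros Hk. apply INR_le. rewrite mult_INR, !pow_INR, plus_INR.
assert (Hk' : 0 < INR k) by (apply lt_0_INR; lia).
replace (INR k + INR 1) with (INR k * (1 + / INR k)) by (simpl; field; lra).
rewrite Rpow_mult_distr.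
assert (Hbase : (1 + / INR k) ^ k <= exp 1).
{ replace (exp 1) with (exp (/ INR k) ^ k)
    by (rewrite <- Rpower_pow by apply exp_pos; unfold Rpower; rewrite ln_exp; f_equal; field; lra).
  apply pow_incr. split; [|apply exp_ineq1_le]. pose proof (Rinv_0_lt_compat _ Hk'). lra. }
pose proof exp_le_3. pose proof (pow_le (INR k) k ltac:(lra)).
replace (INR 3) with 3 by (simpl; lra). nra.
Qed.

Lemma pow_self_le_fact m : (m ^ m <= 3 ^ m * fact m)%nat.
Proof.
induction m as [|m IH]; [cbn; lia|].
destruct (Nat.eq_dec m 0) as [->|Hm]; [cbn; lia|].
pose proof (pow_succ_le_3 m ltac:(lia)).
rewrite !Nat.pow_succ_r'. cbn [fact]. replace (S m) with (m + 1)%nat by lia. nia.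
Qed.

Open Scope nat_scope.

Lemma double_lt_pow2 X : 3 <= X -> 2 * X < 2 ^ X.
Proof.
induction X as [|X IH]; intros HX; [lia|].
destruct (Nat.eq_dec X 2) as [->|]; [cbn; lia|].
rewrite Nat.pow_succ_r'. specialize (IH ltac:(lia)). lia.
Qed.

Lemma codes_lt_boxes r X L : 12 <= r <= X -> 4 * L <= 2 ^ X * (r + 2) ->
  S L * 2 ^ L * (2 ^ (2 * X - r) + 2 ^ X) ^ (2 ^ X) <
  (2 ^ X - 1) ^ (2 ^ X - 2) * fact (2 ^ X).
Proof.
intros Hr HL. set (m := 2 ^ X) in *. set (T := 2 ^ (2 * X - r)).
assert (Hm : 2 * X < m) by (apply double_lt_pow2; lia).
assert (HmT : m <= T) by (apply Nat.pow_le_mono_r; lia).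
assert (Hcode : S L * 2 ^ L <= 2 ^ (2 * L)).
{ pose proof (Nat.pow_gt_lin_r 2 L ltac:(lia)).
  replace (2 * L) with (L + L) by lia. rewrite Nat.pow_add_r. nia. }
assert (Hsets : (T + m) ^ m <= 2 ^ ((2 * X - r + 1) * m)).
{ rewrite Nat.pow_mul_r. apply Nat.pow_le_mono_l. rewrite Nat.pow_add_r, Nat.pow_1_r. lia. }
assert (H3 : 3 ^ m <= 2 ^ (2 * m)).
{ rewrite Nat.pow_mul_r. apply Nat.pow_le_mono_l. cbn. lia. }
assert (Hbase : 2 ^ (X - 1) <= m - 1).
{ unfold m. replace X with (S (X - 1)) at 2 by lia. rewrite Nat.pow_succ_r'.
  pose proof (Nat.pow_nonzero 2 (X - 1) ltac:(lia)). lia. }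
assert (Hboxes : 2 ^ ((X - 1) * (m - 2)) <= (m - 1) ^ (m - 2)).
{ rewrite Nat.pow_mul_r. now apply Nat.pow_le_mono_l. }
assert (Hself : m ^ m = 2 ^ (X * m)) by (unfold m; now rewrite Nat.pow_mul_r).
assert (Hexp : 2 ^ (2 * L + (2 * X - r + 1) * m + 2 * m) < 2 ^ ((X - 1) * (m - 2) + X * m)).
{ apply Nat.pow_lt_mono_r; [lia|]. nia. }
rewrite !Nat.pow_add_r, <- Hself in Hexp.
apply (Nat.mul_lt_mono_pos_r (3 ^ m)); [pose proof (Nat.pow_nonzero 3 m); lia|].
apply Nat.le_lt_trans with (2 ^ (2 * L) * 2 ^ ((2 * X - r + 1) * m) * 2 ^ (2 * m)).
{ apply Nat.mul_le_mono; [apply Nat.mul_le_mono|]; assumption. }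
apply Nat.lt_le_trans with (1 := Hexp).
rewrite <- Nat.mul_assoc, (Nat.mul_comm (fact m)).
apply Nat.mul_le_mono; [exact Hboxes | apply pow_self_le_fact].
Qed.

Open Scope R_scope.

Lemma INR_pow2 j : INR (2 ^ j) = Rpower 2 (INR j).
Proof. rewrite pow_INR, Rpower_pow by lra. reflexivity. Qed.

Lemma INR_4_pow2 X : INR (4 * 2 ^ X) = Rpower 2 (INR (X + 2)).
Proof. rewrite <- INR_pow2, Nat.pow_add_r, Nat.mul_comm. reflexivity. Qed.

Lemma log2_Rpower2 x : log2 (Rpower 2 x) = x.
Proof. unfold log2, Rpower. rewrite ln_exp. pose proof ln_lt_2. field. lra. Qed.

Lemma advice_length_le K r len : (1 <= K)%nat ->
  INR len <= / INR (16 * K) * INR (4 * 2 ^ (r * K)) * log2 (INR (4 * 2 ^ (r * K))) ->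
  (4 * len <= 2 ^ (r * K) * (r + 2))%nat.
Proof.
intros HK Hlen.
rewrite INR_4_pow2, log2_Rpower2, <- INR_4_pow2 in Hlen.
assert (H16K : 0 < INR (16 * K)) by (apply lt_0_INR; lia).
assert (Hnat : (len * (16 * K) <= 4 * 2 ^ (r * K) * (r * K + 2))%nat).
{ apply INR_le. rewrite (mult_INR len), (mult_INR (4 * _)).
  apply (Rmult_le_compat_r (INR (16 * K))) in Hlen; [|lra].
  replace (/ INR (16 * K) * INR (4 * 2 ^ (r * K)) * INR (r * K + 2) * INR (16 * K))
    with (INR (4 * 2 ^ (r * K)) * INR (r * K + 2)) in Hlen by (field; lra).
  exact Hlen. }
nia.
Qed.

Lemma Rpower_pow2_le K r eps : (1 <= K)%nat -> / INR K < 2 - eps ->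
  Rpower (INR (4 * 2 ^ (r * K))) eps <= 16 * INR (2 ^ (2 * (r * K) - r)).
Proof.
intros HK Heps.
rewrite INR_4_pow2, Rpower_mult, INR_pow2.
replace 16 with (Rpower 2 (INR 4)) by (rewrite Rpower_pow by lra; cbn; lra).
rewrite <- Rpower_plus. apply Rle_Rpower; [lra|].
assert (HK0 : 0 < INR K) by (apply lt_0_INR; lia).
pose proof (pos_INR r).
rewrite minus_INR by nia. rewrite !plus_INR, !mult_INR. cbn [INR].
assert (Hbound : (INR r * INR K + (1 + 1)) * eps <= (INR r * INR K + (1 + 1)) * (2 - / INR K))
  by (apply Rmult_le_compat_l; nra).
assert (INR r * INR K * / INR K = INR r) by (field; lra).
pose proof (Rinv_0_lt_compat _ HK0). nra.
Qed.

Theorem mainTheorem10 :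
  forall (eps : R), eps < 2 ->
  forall (f : oracle),
    (* max { |f(G,v)| : G an n-node graph, v in G } = o(n log n) *)
    (forall d : R, 0 < d -> exists N : nat, forall (n : nat) (G : pgraph) (v : nat),
        (N <= n)%nat -> pg_ok G -> pn G = n -> (v < n)%nat ->
        INR (length (f G v)) <= d * INR n * log2 (INR n)) ->
  forall (A : algo),
    exists c : R, 0 < c /\
    forall N : nat, exists n : nat, (N <= n)%nat /\
      exists (G : pgraph) (v : nat),
        pg_ok G /\ pn G = n /\ (v < n)%nat /\
        forall k : nat, completes_at G A (f G v) v k ->
          c * Rpower (INR n) eps <= INR k.
Proof.
intros eps Heps f Hf A.
destruct (archimed_cor1 (2 - eps) ltac:(lra)) as (K & HK & HK0).
exists (/ 16). split; [lra|]. intros N.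
destruct (Hf (/ INR (16 * K))) as (Nd & HNd).
{ apply Rinv_0_lt_compat, lt_0_INR. lia. }
set (r := (12 + N + Nd)%nat). set (X := (r * K)%nat). set (m := (2 ^ X)%nat).
set (T := (2 ^ (2 * X - r))%nat). set (L := (m * (r + 2) / 4)%nat).
assert (HXm : (X < m)%nat) by (apply Nat.pow_gt_lin_r; lia).
assert (HrX : (r <= X)%nat) by (unfold X; nia).
assert (Hadv : forall g, admissible m g -> (length (f (cut_graph m g) 0) <= L)%nat).
{ intros g Hg. apply Nat.div_le_lower_bound; [lia|].
  apply (advice_length_le K); [lia|]. change (2 ^ (r * K))%nat with m.
  apply (HNd _ _ 0%nat); [unfold r in *; lia | now apply cut_graph_ok | reflexivity | lia]. }
destruct (slow_cut_graph_exists m f A L T ltac:(unfold r in *; lia) Hadv) as (g & Hg & Hslow).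
{ apply codes_lt_boxes; [unfold r in *; lia|]. apply Nat.Div0.mul_div_le. }
exists (4 * m)%nat. split; [unfold r in *; lia|].
exists (cut_graph m g), 0%nat. split; [now apply cut_graph_ok|]. split; [reflexivity|].
split; [lia|]. intros k Hk.
apply Hslow, le_INR in Hk.
assert (Hpow : Rpower (INR (4 * m)) eps <= 16 * INR T) by exact (Rpower_pow2_le K r eps ltac:(lia) HK).
lra.
Qed.
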